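(* Let $\mathbb{T}=\mathbb{R}/\mathbb{Z}$ and let $u:\mathbb{T}\times[0,T]\to\mathbb{R}$ be smooth with $u_{xx}\in C(\mathbb{T}\times[0,T])$. Then there exists $C>0$ such that, when $\Delta t$ is sufficiently small, for all $n\in\{0,\dots,N-1\}$, $$\frac12\le\frac{1}{1+C\Delta t_n}\le|X^n|_{W^{1,\infty}(\mathbb{T})}\le1+C\Delta t_n\le\frac32,\qquad |X^n|_{W^{2,\infty}(\mathbb{T})}\le C\Delta t_n.$$
   Context: Temporal mesh $0=t^0<\dots<t^N=T$, $\Delta t_n=t^{n+1}-t^n$, $\Delta t=\max_n\Delta t_n$. $X^n(x)=x-\Delta t_n(\tfrac16k_1^n+\tfrac46k_2^n+\tfrac16k_3^n)(x)$ with $k_1^n(x)=u(x,t^{n+1})$, $k_2^n(x)=u(x-\tfrac{\Delta t_n}{2}k_1^n(x),t^{n+1}-\tfrac{\Delta t_n}{2})$, $k_3^n(x)=u(x-\Delta t_n(-k_1^n(x)+2k_2^n(x)),t^{n+1}-\Delta t_n)$. Seminorms: $|f|_{W^{m,\infty}(\mathbb{T})}=\|D^mf\|_{L^\infty(\mathbb{T})}$, $D=d/dx$. *)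

From Stdlib Require Import Reals.
From Coquelicot Require Import Coquelicot.
Open Scope R_scope.

(* Stages of the third-order (Kutta) RK characteristic foot map.
   tn1 = t^{n+1}, dt = Delta t_n. *)
Definition k1 (u : R -> R -> R) (tn1 : R) (x : R) : R := u x tn1.

Definition k2 (u : R -> R -> R) (tn1 dt : R) (x : R) : R :=
  u (x - dt / 2 * k1 u tn1 x) (tn1 - dt / 2).

Definition k3 (u : R -> R -> R) (tn1 dt : R) (x : R) : R :=
  u (x - dt * (- k1 u tn1 x + 2 * k2 u tn1 dt x)) (tn1 - dt).

Definition Xmap (u : R -> R -> R) (tn1 dt : R) (x : R) : R :=
  x - dt * (1/6 * k1 u tn1 x + 4/6 * k2 u tn1 dt x + 1/6 * k3 u tn1 dt x).

Definition Xn (u : R -> R -> R) (t : nat -> R) (n : nat) : R -> R :=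
  Xmap u (t (S n)) (t (S n) - t n).

(* |f|_{W^{m,oo}(T)} = || D^m f ||_{L^oo} (sup over R = sup over one period
   for 1-periodic D^m f), as an extended real (a least upper bound). *)
Definition Winf_semi (m : nat) (f : R -> R) : Rbar :=
  Lub_Rbar (fun r => exists x : R, r = Rabs (Derive_n f m x)).

Definition is_mesh (T : R) (N : nat) (t : nat -> R) : Prop :=
  t O = 0 /\ t N = T /\ (forall n, (n < N)%nat -> t n < t (S n)).

Fixpoint mesh_max (t : nat -> R) (N : nat) : R :=
  match N with
  | O => 0
  | S k => Rmax (mesh_max t k) (t (S k) - t k)
  end.

(* continuity of f on T x [0,T] (i.e. on R x [0,T], relative topology) *)
Definition cont_on_strip (T : R) (f : R -> R -> R) : Prop :=
  forall x s, 0 <= s <= T ->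
    filterlim (fun p : R * R => f (fst p) (snd p))
      (within (fun p : R * R => 0 <= snd p <= T) (locally (x, s)))
      (locally (f x s)).

From Stdlib Require Import Reals Lra Lia Psatz List Classical ClassicalEpsilon.
From Coquelicot Require Import Coquelicot.
Open Scope R_scope.

(* X^n is a perturbation of the identity of size dt: differentiating the three
   Runge-Kutta stages with the chain rule gives X' = 1 - dt * (...) and X'' = dt * (...),
   where the brackets are polynomials in the values of u_x and u_xx at three time
   levels, hence bounded by 3 M^3 and 12 M^5 with M >= 1 a bound of |u_x| and |u_xx|.
   Such an M exists because u_x and u_xx are 1-periodic in x (derivatives of a periodic
   function) and continuous on the compact box [0,1] x [0,T].  With C = 12 M^5 and
   C dt <= 1/2 this gives |X' - 1| <= C dt / 4 and |X''| <= C dt, and the lower bound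
   follows from 1/(1+h) <= 1 - h/4 for 0 <= h <= 1/2. *)

Lemma periodic_shift_IZR (f : R -> R) :
  (forall x, f (x + 1) = f x) -> forall k x, f (x + IZR k) = f x.
Proof.
  intros Hper k. induction k using Z.peano_ind; intros x.
  - now rewrite Rplus_0_r.
  - rewrite succ_IZR, <- Rplus_assoc, Hper. apply IHk.
  - rewrite <- (IHk x), <- Z.sub_1_r, minus_IZR.
    replace (x + IZR k) with (x + (IZR k - 1) + 1) by ring.
    now rewrite Hper.
Qed.

Lemma periodic_derive (f f' : R -> R) :
  (forall x, f (x + 1) = f x) -> (forall x, is_derive f x (f' x)) ->
  forall x, f' (x + 1) = f' x.
Proof.
  intros Hper Hf x.
  assert (Hshift : is_derive (fun y => f (y + 1)) x (f' (x + 1))).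
  { auto_derive.
    - now exists (f' (x + 1)).
    - rewrite Rmult_1_l. apply is_derive_unique, Hf. }
  rewrite <- (is_derive_unique _ _ _ Hshift), <- (is_derive_unique _ _ _ (Hf x)).
  apply Derive_ext. exact Hper.
Qed.

Lemma list_upper_bound {A : Type} (g : A -> R) (l : list A) :
  exists B, forall a, In a l -> g a <= B.
Proof.
  induction l as [|a0 l [B HB]].
  - now exists 0.
  - exists (Rmax (g a0) B). intros a [<-|Ha].
    + apply Rmax_l.
    + eapply Rle_trans; [apply HB, Ha|apply Rmax_r].
Qed.

Lemma locally_bounded_box_bounded (g : R -> R -> R) (a b c d : R) :
  (forall x s, a <= x <= b -> c <= s <= d ->
     exists (e : posreal) (B : R), forall y r, c <= r <= d ->
       Rabs (y - x) < e -> Rabs (r - s) < e -> Rabs (g y r) <= B) ->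
  exists B, forall x s, a <= x <= b -> c <= s <= d -> Rabs (g x s) <= B.
Proof.
  intros Hloc.
  assert (Hgauge : forall p : R * (R * unit), exists eB : posreal * R,
    a <= fst p <= b -> c <= fst (snd p) <= d ->
    forall y r, c <= r <= d -> Rabs (y - fst p) < fst eB ->
      Rabs (r - fst (snd p)) < fst eB -> Rabs (g y r) <= snd eB).
  { intros [x [s []]]; simpl.
    destruct (classic (a <= x <= b /\ c <= s <= d)) as [[Hx Hs]|Hout].
    - destruct (Hloc x s Hx Hs) as [e [B HB]]. now exists (e, B).
    - exists (mkposreal 1 Rlt_0_1, 0). tauto. }
  destruct (choice _ Hgauge) as [eB HeB].
  apply NNPP. intros Hnot.
  apply (compactness_list 2 (a, (c, tt)) (b, (d, tt)) (fun p => fst (eB p))).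
  intros [l Hcover]. apply Hnot.
  destruct (list_upper_bound (fun p => snd (eB p)) l) as [B HB].
  exists B. intros x s Hx Hs.
  destruct (Hcover (x, (s, tt))) as [[y [r []]] [Hin [[Hy [Hr _]] [Hxy [Hsr _]]]]];
    [simpl; tauto|].
  eapply Rle_trans; [|apply (HB _ Hin)].
  now apply (HeB (y, (r, tt))).
Qed.

Lemma cont_on_strip_locally_bounded (T : R) (f : R -> R -> R) :
  cont_on_strip T f -> forall x s, 0 <= s <= T ->
  exists (e : posreal) (B : R), forall y r, 0 <= r <= T ->
    Rabs (y - x) < e -> Rabs (r - s) < e -> Rabs (f y r) <= B.
Proof.
  intros Hcont x s Hs.
  destruct (Hcont x s Hs _ (locally_ball (f x s) (mkposreal 1 Rlt_0_1))) as [e He].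
  exists e, (Rabs (f x s) + 1). intros y r Hr Hy Hsr.
  assert (Hball : Rabs (f y r - f x s) < 1) by (apply (He (y, r)); [split|]; assumption).
  pose proof (Rabs_triang_inv (f y r) (f x s)). lra.
Qed.

Lemma cont_on_strip_periodic_bounded (T : R) (f : R -> R -> R) :
  cont_on_strip T f -> (forall x s, 0 <= s <= T -> f (x + 1) s = f x s) ->
  exists B, forall x s, 0 <= s <= T -> Rabs (f x s) <= B.
Proof.
  intros Hcont Hper.
  destruct (locally_bounded_box_bounded f 0 1 0 T) as [B HB].
  { intros x s _ Hs. now apply cont_on_strip_locally_bounded. }
  exists B. intros x s Hs.
  destruct (base_Int_part x) as [Hlow Hup].
  replace x with (x - IZR (Int_part x) + IZR (Int_part x)) by ring.
  rewrite (periodic_shift_IZR (fun y => f y s) (fun y => Hper y s Hs)).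
  apply HB; [lra|exact Hs].
Qed.

Lemma Rabs_plus_le (p q P Q : R) : Rabs p <= P -> Rabs q <= Q -> Rabs (p + q) <= P + Q.
Proof. intros. eapply Rle_trans; [apply Rabs_triang|lra]. Qed.

Lemma Rabs_minus_le (p q P Q : R) : Rabs p <= P -> Rabs q <= Q -> Rabs (p - q) <= P + Q.
Proof. intros. eapply Rle_trans; [apply Rabs_triang|]. rewrite Rabs_Ropp. lra. Qed.

Lemma Rabs_opp_le (p P : R) : Rabs p <= P -> Rabs (- p) <= P.
Proof. now rewrite Rabs_Ropp. Qed.

Lemma Rabs_mult_le (p q P Q : R) : Rabs p <= P -> Rabs q <= Q -> Rabs (p * q) <= P * Q.
Proof. intros. rewrite Rabs_mult. apply Rmult_le_compat; auto using Rabs_pos. Qed.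

Lemma Rabs_nonneg_le (p : R) : 0 <= p -> Rabs p <= p.
Proof. intros. now rewrite Rabs_pos_eq. Qed.

Definition chain1 (f' g g' : R -> R) (x : R) : R := g' x * f' (g x).

Definition chain2 (f' f'' g g' g'' : R -> R) (x : R) : R :=
  g'' x * f' (g x) + g' x * (g' x * f'' (g x)).

Section ChainBounds.
Variables (M : R) (f' f'' : R -> R).
Hypothesis Hf' : forall y, Rabs (f' y) <= M.
Hypothesis Hf'' : forall y, Rabs (f'' y) <= M.

Lemma Rabs_chain1_le (g g' : R -> R) (x Q : R) :
  Rabs (g' x) <= Q -> Rabs (chain1 f' g g' x) <= Q * M.
Proof. intros. now apply Rabs_mult_le. Qed.

Lemma Rabs_chain2_le (g g' g'' : R -> R) (x P Q : R) :
  Rabs (g'' x) <= P -> Rabs (g' x) <= Q ->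
  Rabs (chain2 f' f'' g g' g'' x) <= P * M + Q * (Q * M).
Proof. intros. unfold chain2. auto using Rabs_plus_le, Rabs_mult_le. Qed.

End ChainBounds.

(* [bound_abs] splits a goal [Rabs e <= ?B] along the structure of [e] (triangle
   inequality, multiplicativity, the chain-rule bounds, hints in [abs_bounds]) down to
   hypotheses [forall y, Rabs (f y) <= M] and nonnegative constants, instantiating
   [?B] with the resulting bound. *)
Create HintDb abs_bounds.

Ltac bound_abs :=
  repeat first
    [ eassumption
    | solve [eauto 1 with nocore abs_bounds]
    | apply Rabs_chain1_le | apply Rabs_chain2_le
    | apply Rabs_plus_le | apply Rabs_minus_le | apply Rabs_opp_le
    | apply Rabs_mult_le
    | match goal with H : forall y, Rabs (?f y) <= _ |- Rabs (?f _) <= _ => apply H end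
    | apply Rabs_nonneg_le; lra ].

Section RK3Foot.
Variables (a b c : R -> R) (dt : R).

Definition stage2 (x : R) : R := x - dt / 2 * a x.
Definition stage3 (x : R) : R := x - dt * (- a x + 2 * b (stage2 x)).
Definition foot (x : R) : R :=
  x - dt * (1/6 * a x + 4/6 * b (stage2 x) + 1/6 * c (stage3 x)).

Variables (a' b' c' a'' b'' c'' : R -> R).

Definition stage2' (x : R) : R := 1 - dt / 2 * a' x.
Definition stage2'' (x : R) : R := - (dt / 2 * a'' x).
Definition stage3' (x : R) : R :=
  1 - dt * (- a' x + 2 * chain1 b' stage2 stage2' x).
Definition stage3'' (x : R) : R :=
  - (dt * (- a'' x + 2 * chain2 b' b'' stage2 stage2' stage2'' x)).
Definition foot' (x : R) : R :=
  1 - dt * (1/6 * a' x + 4/6 * chain1 b' stage2 stage2' x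
            + 1/6 * chain1 c' stage3 stage3' x).
Definition foot'' (x : R) : R :=
  - (dt * (1/6 * a'' x + 4/6 * chain2 b' b'' stage2 stage2' stage2'' x
           + 1/6 * chain2 c' c'' stage3 stage3' stage3'' x)).

Section Derivatives.
Hypothesis Ha : forall x, is_derive a x (a' x).
Hypothesis Hb : forall x, is_derive b x (b' x).
Hypothesis Hc : forall x, is_derive c x (c' x).
Hypothesis Ha' : forall x, is_derive a' x (a'' x).
Hypothesis Hb' : forall x, is_derive b' x (b'' x).
Hypothesis Hc' : forall x, is_derive c' x (c'' x).

Ltac derive_unfolded :=
  unfold foot, foot', foot'', stage3, stage3', stage3'', stage2, stage2', stage2'',
    chain1, chain2;
  auto_derive;
  [ repeat split; eexists; eauto
  | rewrite ?(fun y => is_derive_unique _ _ _ (Ha y)),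
      ?(fun y => is_derive_unique _ _ _ (Hb y)),
      ?(fun y => is_derive_unique _ _ _ (Hc y)),
      ?(fun y => is_derive_unique _ _ _ (Ha' y)),
      ?(fun y => is_derive_unique _ _ _ (Hb' y)),
      ?(fun y => is_derive_unique _ _ _ (Hc' y));
    unfold Rminus; ring ].

Lemma is_derive_foot (x : R) : is_derive foot x (foot' x).
Proof. derive_unfolded. Qed.

Lemma is_derive_foot' (x : R) : is_derive foot' x (foot'' x).
Proof. derive_unfolded. Qed.

End Derivatives.

Section Estimates.
Variable M : R.
Hypothesis HM : 1 <= M.
Hypothesis Hdt : 0 < dt <= 1.
Hypothesis Ha' : forall y, Rabs (a' y) <= M.
Hypothesis Hb' : forall y, Rabs (b' y) <= M.
Hypothesis Hc' : forall y, Rabs (c' y) <= M.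
Hypothesis Ha'' : forall y, Rabs (a'' y) <= M.
Hypothesis Hb'' : forall y, Rabs (b'' y) <= M.
Hypothesis Hc'' : forall y, Rabs (c'' y) <= M.

Lemma Rabs_dt_le1 : Rabs dt <= 1.
Proof. rewrite Rabs_pos_eq; lra. Qed.
#[local] Hint Resolve Rabs_dt_le1 : abs_bounds.

Lemma Rabs_stage2'_le (x : R) : Rabs (stage2' x) <= 2 * M.
Proof. unfold stage2'. eapply Rle_trans; [bound_abs|nra]. Qed.
#[local] Hint Resolve Rabs_stage2'_le : abs_bounds.

Lemma Rabs_stage2''_le (x : R) : Rabs (stage2'' x) <= M.
Proof. unfold stage2''. eapply Rle_trans; [bound_abs|nra]. Qed.
#[local] Hint Resolve Rabs_stage2''_le : abs_bounds.

Lemma Rabs_stage3'_le (x : R) : Rabs (stage3' x) <= 6 * M ^ 2.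
Proof. unfold stage3'. eapply Rle_trans; [bound_abs|nra]. Qed.
#[local] Hint Resolve Rabs_stage3'_le : abs_bounds.

Lemma Rabs_stage3''_le (x : R) : Rabs (stage3'' x) <= 11 * M ^ 3.
Proof. unfold stage3''. eapply Rle_trans; [bound_abs|nra]. Qed.
#[local] Hint Resolve Rabs_stage3''_le : abs_bounds.

Lemma Rabs_dt_mult_le (S B : R) : Rabs S <= B -> Rabs (dt * S) <= dt * B.
Proof. intros. rewrite Rabs_mult, (Rabs_pos_eq dt) by lra. apply Rmult_le_compat_l; lra. Qed.

Lemma Rabs_foot'_sub1_le (x : R) : Rabs (foot' x - 1) <= dt * (3 * M ^ 3).
Proof.
  unfold foot'.
  match goal with |- Rabs (1 - dt * ?S - 1) <= _ =>
    replace (1 - dt * S - 1) with (- (dt * S)) by ring end.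
  apply Rabs_opp_le, Rabs_dt_mult_le. eapply Rle_trans; [bound_abs|nra].
Qed.

Lemma Rabs_foot''_le (x : R) : Rabs (foot'' x) <= dt * (12 * M ^ 5).
Proof.
  unfold foot''. apply Rabs_opp_le, Rabs_dt_mult_le. eapply Rle_trans; [bound_abs|].
  pose proof (Rle_pow M 1 5 HM ltac:(lia)). pose proof (Rle_pow M 2 5 HM ltac:(lia)).
  pose proof (Rle_pow M 3 5 HM ltac:(lia)). pose proof (Rle_pow M 4 5 HM ltac:(lia)). nra.
Qed.

End Estimates.
End RK3Foot.

Lemma Derive_n_1_2 (f f' f'' : R -> R) :
  (forall x, is_derive f x (f' x)) -> (forall x, is_derive f' x (f'' x)) ->
  forall x, Derive_n f 1 x = f' x /\ Derive_n f 2 x = f'' x.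
Proof.
  intros Hf Hf' x. split.
  - now apply is_derive_unique.
  - simpl. rewrite (Derive_ext _ f'); [now apply is_derive_unique|].
    intros y. now apply is_derive_unique.
Qed.

Lemma Xmap_derivative_estimates (T M tn1 dt : R) (u ux uxx : R -> R -> R) :
  1 <= M -> 0 < dt <= 1 -> 0 <= tn1 - dt -> tn1 <= T ->
  (forall x s, 0 <= s <= T -> is_derive (fun y => u y s) x (ux x s)) ->
  (forall x s, 0 <= s <= T -> is_derive (fun y => ux y s) x (uxx x s)) ->
  (forall x s, 0 <= s <= T -> Rabs (ux x s) <= M /\ Rabs (uxx x s) <= M) ->
  forall x, Rabs (Derive_n (Xmap u tn1 dt) 1 x - 1) <= dt * (3 * M ^ 3) /\
            Rabs (Derive_n (Xmap u tn1 dt) 2 x) <= dt * (12 * M ^ 5).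
Proof.
  intros HM Hdt Hlow Hup Hux Huxx Hbound x.
  assert (Hs1 : 0 <= tn1 <= T) by lra.
  assert (Hs2 : 0 <= tn1 - dt / 2 <= T) by lra.
  assert (Hs3 : 0 <= tn1 - dt <= T) by lra.
  pose proof (fun s Hs y => Hux y s Hs) as Hu.
  pose proof (fun s Hs y => Huxx y s Hs) as Hu'.
  (* [Xmap u tn1 dt] unfolds to [foot] of the slices at tn1, tn1 - dt/2 and tn1 - dt. *)
  destruct (Derive_n_1_2 (Xmap u tn1 dt) _ _
    (is_derive_foot _ _ _ dt _ _ _ (Hu _ Hs1) (Hu _ Hs2) (Hu _ Hs3))
    (is_derive_foot' _ _ dt _ _ _ _ _ _ (Hu _ Hs1) (Hu _ Hs2)
       (Hu' _ Hs1) (Hu' _ Hs2) (Hu' _ Hs3)) x) as [-> ->].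
  split; [apply Rabs_foot'_sub1_le | apply Rabs_foot''_le]; trivial;
    intros y; apply Hbound; assumption.
Qed.

Lemma Winf_semi_le (m : nat) (f : R -> R) (B : R) :
  (forall x, Rabs (Derive_n f m x) <= B) -> Rbar_le (Winf_semi m f) B.
Proof.
  intros HB. apply (Lub_Rbar_correct _). intros r [x ->]. apply HB.
Qed.

Lemma Winf_semi_ge (m : nat) (f : R -> R) (B x : R) :
  B <= Rabs (Derive_n f m x) -> Rbar_le B (Winf_semi m f).
Proof.
  intros HB.
  destruct (Lub_Rbar_correct (fun r => exists y, r = Rabs (Derive_n f m y))) as [Hub _].
  eapply Rbar_le_trans; [|apply Hub; now exists x]. exact HB.
Qed.

Lemma Winf_semi_near_identity (f : R -> R) (h : R) :
  0 <= h <= 1 / 2 ->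
  (forall x, Rabs (Derive_n f 1 x - 1) <= h / 4) ->
  (forall x, Rabs (Derive_n f 2 x) <= h) ->
  1 / 2 <= 1 / (1 + h) /\
  Rbar_le (Finite (1 / (1 + h))) (Winf_semi 1 f) /\
  Rbar_le (Winf_semi 1 f) (Finite (1 + h)) /\
  1 + h <= 3 / 2 /\
  Rbar_le (Winf_semi 2 f) (Finite h).
Proof.
  intros Hh Hf' Hf''.
  assert (Hinv : 1 / (1 + h) <= 1 - h / 4).
  { apply Rmult_le_reg_r with (1 + h); [lra|]. field_simplify; nra. }
  repeat split.
  - apply Rmult_le_reg_r with (1 + h); [lra|]. field_simplify; lra.
  - apply (Winf_semi_ge _ _ _ 0). specialize (Hf' 0).
    apply Rabs_le_between in Hf'. pose proof (Rle_abs (Derive_n f 1 0)). lra.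
  - apply Winf_semi_le. intros x. specialize (Hf' x).
    pose proof (Rabs_triang (Derive_n f 1 x - 1) 1). rewrite Rabs_R1 in *.
    replace (Derive_n f 1 x - 1 + 1) with (Derive_n f 1 x) in * by ring. lra.
  - lra.
  - apply Winf_semi_le, Hf''.
Qed.

Lemma is_mesh_le (T : R) (N : nat) (t : nat -> R) :
  is_mesh T N t -> forall i j, (i <= j <= N)%nat -> t i <= t j.
Proof.
  intros [_ [_ Hinc]] i j [Hij HjN].
  induction Hij as [|j Hij IH]; [lra|].
  pose proof (Hinc j ltac:(lia)). specialize (IH ltac:(lia)). lra.
Qed.

Lemma mesh_max_ge (t : nat -> R) (N n : nat) :
  (n < N)%nat -> t (S n) - t n <= mesh_max t N.
Proof.
  induction N as [|N IH]; intros Hn; [lia|]. simpl.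
  destruct (Nat.eq_dec n N) as [->|Hne]; [apply Rmax_r|].
  eapply Rle_trans; [apply IH; lia|apply Rmax_l].
Qed.

Lemma is_mesh_step (T : R) (N : nat) (t : nat -> R) (n : nat) :
  is_mesh T N t -> (n < N)%nat ->
  0 <= t n /\ t (S n) <= T /\ 0 < t (S n) - t n <= mesh_max t N.
Proof.
  intros Hmesh Hn. pose proof Hmesh as [Ht0 [HtN Hinc]].
  pose proof (is_mesh_le T N t Hmesh 0 n ltac:(lia)).
  pose proof (is_mesh_le T N t Hmesh (S n) N ltac:(lia)).
  pose proof (Hinc n Hn). pose proof (mesh_max_ge t N n Hn). lra.
Qed.

Lemma derivatives_bounded_on_strip (T : R) (u ux uxx : R -> R -> R) :
  (forall x s, u (x + 1) s = u x s) ->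
  (forall x s, 0 <= s <= T -> is_derive (fun y => u y s) x (ux x s)) ->
  (forall x s, 0 <= s <= T -> is_derive (fun y => ux y s) x (uxx x s)) ->
  cont_on_strip T ux -> cont_on_strip T uxx ->
  exists M, 1 <= M /\
    forall x s, 0 <= s <= T -> Rabs (ux x s) <= M /\ Rabs (uxx x s) <= M.
Proof.
  intros Hper Hux Huxx Hcux Hcuxx.
  assert (Pux : forall x s, 0 <= s <= T -> ux (x + 1) s = ux x s).
  { intros x s Hs. apply (periodic_derive (fun y => u y s) (fun y => ux y s)).
    - intros y. apply Hper.
    - intros y. apply Hux, Hs. }
  assert (Puxx : forall x s, 0 <= s <= T -> uxx (x + 1) s = uxx x s).
  { intros x s Hs. apply (periodic_derive (fun y => ux y s) (fun y => uxx y s)).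
    - intros y. apply Pux, Hs.
    - intros y. apply Huxx, Hs. }
  destruct (cont_on_strip_periodic_bounded T ux Hcux Pux) as [M1 HM1].
  destruct (cont_on_strip_periodic_bounded T uxx Hcuxx Puxx) as [M2 HM2].
  exists (Rmax 1 (Rmax M1 M2)). split; [apply Rmax_l|].
  intros x s Hs. specialize (HM1 x s Hs). specialize (HM2 x s Hs).
  pose proof (Rmax_l M1 M2). pose proof (Rmax_r M1 M2). pose proof (Rmax_r 1 (Rmax M1 M2)).
  split; lra.
Qed.

Theorem lemma8 (T : R) (u ux uxx : R -> R -> R)
  (HT : 0 < T)
  (Hper : forall x s, u (x + 1) s = u x s)
  (Hux : forall x s, 0 <= s <= T -> is_derive (fun y => u y s) x (ux x s))
  (Huxx : forall x s, 0 <= s <= T -> is_derive (fun y => ux y s) x (uxx x s))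
  (Hcu : cont_on_strip T u)
  (Hcux : cont_on_strip T ux)
  (Hcuxx : cont_on_strip T uxx) :
  exists C : R, 0 < C /\
  exists delta : R, 0 < delta /\
  forall (N : nat) (t : nat -> R),
    is_mesh T N t -> mesh_max t N <= delta ->
    forall n : nat, (n < N)%nat ->
      let dtn := t (S n) - t n in
      1 / 2 <= 1 / (1 + C * dtn) /\
      Rbar_le (Finite (1 / (1 + C * dtn))) (Winf_semi 1 (Xn u t n)) /\
      Rbar_le (Winf_semi 1 (Xn u t n)) (Finite (1 + C * dtn)) /\
      1 + C * dtn <= 3 / 2 /\
      Rbar_le (Winf_semi 2 (Xn u t n)) (Finite (C * dtn)).
Proof.
  destruct (derivatives_bounded_on_strip T u ux uxx Hper Hux Huxx Hcux Hcuxx)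
    as [M [HM Hbound]].
  pose proof (Rle_pow M 3 5 HM ltac:(lia)) as HM35.
  pose proof (pow_R1_Rle M 3 HM) as HM3.
  set (C := 12 * M ^ 5).
  assert (HC : 12 <= C) by (unfold C; lra).
  exists C. split; [lra|].
  exists (1 / (2 * C)). split; [apply Rdiv_lt_0_compat; lra|].
  intros N t Hmesh Hmax n Hn dtn.
  destruct (is_mesh_step T N t n Hmesh Hn) as [Ht0 [HtT [Hdt Hdtmax]]].
  fold dtn in Hdt, Hdtmax.
  assert (Hsmall : C * dtn <= 1 / 2).
  { replace (1 / 2) with (C * (1 / (2 * C))) by (field; lra).
    apply Rmult_le_compat_l; lra. }
  assert (Hdt1 : 0 < dtn <= 1) by nra.
  pose proof (Xmap_derivative_estimates T M (t (S n)) dtn u ux uxx HM Hdt1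
    ltac:(unfold dtn; lra) HtT Hux Huxx Hbound) as Hest.
  apply Winf_semi_near_identity; [nra| |]; intros x; destruct (Hest x) as [D1 D2].
  - eapply Rle_trans; [apply D1|unfold C; nra].
  - eapply Rle_trans; [apply D2|unfold C; nra].
Qed.
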